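(* Let $m,d,d_{\mathrm{head}}$ be positive integers with $d_{\mathrm{head}}\mid d$, $h=d/d_{\mathrm{head}}$, and let $X\in\mathbb{R}^{m\times d}$, $W_{Q,r},W_{K,r},W_{V,r}\in\mathbb{R}^{d\times d_{\mathrm{head}}}$ for $r=1,\dots,h$, and $W_O\in\mathbb{R}^{d\times d}$. Define $Q_r=XW_{Q,r}$, $K_r=XW_{K,r}$, $V_r=XW_{V,r}$, $E_r=Q_rK_r^\top/\sqrt{d_{\mathrm{head}}}\in\mathbb{R}^{m\times m}$, $A_r=\mathrm{softmax}(E_r)$ (row-wise), $O_r=A_rV_r$, $O=\mathrm{Concat}(O_1,\dots,O_h)\in\mathbb{R}^{m\times d}$ (column-wise), and $f=OW_O$. Assume all entries of $f,O,E_r,Q_r,K_r,V_r$ are nonzero, and let $R(f)\in\mathbb{R}^{m\times d}$ be arbitrary. Set $\Lambda_f=R(f)/f$, $R(O_r)=\big[\tfrac12 O\odot(\Lambda_fW_O^\top)\big]_r$, $\Lambda_{O,r}=R(O_r)/O_r$, $\Phi_r=\big(A_r\odot[\Lambda_{O,r}V_r^\top]\big)/E_r$, $\Theta_{Q,r}=\Phi_rK_r$, $\Theta_{K,r}=\Phi_r^\top Q_r$, $\Theta_{V,r}=A_r^\top\Lambda_{O,r}$, and $\alpha=\frac{1}{8\sqrt{d_{\mathrm{head}}}}$. Then the relevances obtained by applying the bilinear LRP rule to $f=OW_O$, to each $O_r=A_rV_r$, treating softmax as identity relevance propagation ($R(E_r)=R(A_r)$), applying the bilinear rule to $E_r=Q_rK_r^\top/\sqrt{d_{\mathrm{head}}}$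 and to $Q_r=XW_{Q,r}$, $K_r=XW_{K,r}$, $V_r=XW_{V,r}$ (summing the relevance of $X$ over all heads and all three projections) are $$R(W_O)=\tfrac12 W_O\odot[O^\top\Lambda_f],\quad R(W_{Q,r})=\alpha\,W_{Q,r}\odot[X^\top\Theta_{Q,r}],\quad R(W_{K,r})=\alpha\,W_{K,r}\odot[X^\top\Theta_{K,r}],\quad R(W_{V,r})=\tfrac14 W_{V,r}\odot[X^\top\Theta_{V,r}],$$ $$R(X)=X\odot\sum_{r=1}^{h}\Big[\alpha\,\Theta_{Q,r}W_{Q,r}^\top+\alpha\,\Theta_{K,r}W_{K,r}^\top+\tfrac14\Theta_{V,r}W_{V,r}^\top\Big],$$ and they satisfy $$\sum R(X)+\sum R(W_O)+\sum_{r=1}^{h}\Big[\sum R(W_{Q,r})+\sum R(W_{K,r})+\sum R(W_{V,r})\Big]=\sum R(f),$$ where $\sum$ denotes the sum of all entries.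
   Context: $\odot$ is element-wise product; all matrix divisions are element-wise; $[M]_r$ denotes the $r$-th column block (columns $(r-1)d_{\mathrm{head}}+1,\dots,rd_{\mathrm{head}}$) of a matrix $M$ with $d$ columns. Bilinear LRP rule for a bilinear expression $C_{ij}=\sum_a c\,P_{ia}W_{aj}$ (with constant $c$, plus possibly a bias) and output relevance $R(C)$: each product term receives $\frac{c\,P_{ia}W_{aj}}{C_{ij}}R(C)_{ij}$, split equally between its two factors; relevances of an entry are summed over all terms in which it appears. *)

From HB Require Import structures.
From mathcomp Require Import all_boot all_order all_algebra.
From mathcomp Require Import reals sequences.
Set Implicit Arguments. Unset Strict Implicit. Unset Printing Implicit Defensive.
Import Order.TTheory GRing.Theory Num.Theory.
Local Open Scope ring_scope.

Definition hadm {R : realType} {m n : nat} (A B : 'M[R]_(m, n)) : 'M[R]_(m, n) :=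
  \matrix_(i, j) (A i j * B i j).
Definition ediv {R : realType} {m n : nat} (A B : 'M[R]_(m, n)) : 'M[R]_(m, n) :=
  \matrix_(i, j) (A i j / B i j).

Definition msum {R : realType} {m n : nat} (A : 'M[R]_(m, n)) : R :=
  \sum_(i < m) \sum_(j < n) A i j.

(* column-block indexing: column j of a matrix with h*dh columns lies in block
   j %/ dh at offset j %% dh (0-based); block r, offset c is column r*dh + c. *)
Lemma blk_lt (h dh : nat) (j : 'I_(h * dh)) : (j %/ dh < h)%N.
Proof.
case: dh j => [|dh] j; first by case: j => j; rewrite muln0.
by rewrite ltn_divLR // ltn_ord.
Qed.

Lemma off_lt (h dh : nat) (j : 'I_(h * dh)) : (j %% dh < dh)%N.
Proof.
case: dh j => [|dh] j; first by case: j => j; rewrite muln0.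
by rewrite ltn_pmod.
Qed.

Lemma bidx_lt (h dh : nat) (r : 'I_h) (c : 'I_dh) : (r * dh + c < h * dh)%N.
Proof.
have Hr := ltn_ord r; have Hc := ltn_ord c.
apply: (@leq_trans (r.+1 * dh)); first by rewrite mulSn [(dh + _)%N]addnC ltn_add2l.
by rewrite leq_mul2r Hr orbT.
Qed.

Definition blk (h dh : nat) (j : 'I_(h * dh)) : 'I_h := Ordinal (blk_lt j).
Definition off (h dh : nat) (j : 'I_(h * dh)) : 'I_dh := Ordinal (off_lt j).
Definition bidx (h dh : nat) (r : 'I_h) (c : 'I_dh) : 'I_(h * dh) :=
  Ordinal (bidx_lt r c).

Definition colblk {R : realType} {m h dh : nat} (M : 'M[R]_(m, h * dh)) (r : 'I_h)
  : 'M[R]_(m, dh) := \matrix_(i, c) M i (bidx r c).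

Definition concat {R : realType} {m h dh : nat} (O : 'I_h -> 'M[R]_(m, dh))
  : 'M[R]_(m, h * dh) := \matrix_(i, j) O (blk j) i (off j).

Definition softmax {R : realType} {m n : nat} (E : 'M[R]_(m, n)) : 'M[R]_(m, n) :=
  \matrix_(i, j) (expR (E i j) / \sum_(k < n) expR (E i k)).

(* Bilinear LRP rule for C_ij = sum_a c P_ia W_aj (C = c *: (P *m W)) with
   output relevance RC: the term (i,a,j) receives c P_ia W_aj / C_ij * RC_ij,
   split equally between its two factors; relevances summed over all terms. *)
Definition lrp_left {R : realType} {m p n : nat} (c : R)
  (P : 'M[R]_(m, p)) (W : 'M[R]_(p, n)) (RC : 'M[R]_(m, n)) : 'M[R]_(m, p) :=
  \matrix_(i, a) \sum_(j < n)
     ((c * P i a * W a j) / ((c *: (P *m W)) i j) * RC i j / 2).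
Definition lrp_right {R : realType} {m p n : nat} (c : R)
  (P : 'M[R]_(m, p)) (W : 'M[R]_(p, n)) (RC : 'M[R]_(m, n)) : 'M[R]_(p, n) :=
  \matrix_(a, j) \sum_(i < m)
     ((c * P i a * W a j) / ((c *: (P *m W)) i j) * RC i j / 2).

From HB Require Import structures.
From mathcomp Require Import all_boot all_order all_algebra.
From mathcomp Require Import reals sequences.
From mathcomp.algebra_tactics Require Import ring.
Set Implicit Arguments. Unset Strict Implicit. Unset Printing Implicit Defensive.
Import Order.TTheory GRing.Theory Num.Theory.
Local Open Scope ring_scope.

(* A bilinear LRP step for C = c (P W) has the closed forms
   R(P) = c/2 P ⊙ [(R(C)/C) W^T] and R(W) = c/2 W ⊙ [P^T (R(C)/C)], and when
   C has no zero entry it is conservative: for fixed (i, j) the shares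
   c P_ia W_aj / C_ij sum to 1 over a, so R(P) and R(W) together carry sum R(C).
   Chaining the closed forms through the attention layer produces the factors
   1/2 per bilinear step and 1/sqrt(dh) from the score scaling; conservation
   telescopes from the inputs and weights back to R(f), because the heads
   partition the columns of O and softmax passes its relevance on unchanged. *)

Section EntrywiseAlgebra.
Variable R : realType.

Lemma edivZl m n (M N : 'M[R]_(m, n)) k : ediv (k *: M) N = k *: ediv M N.
Proof. by apply/matrixP => i j; rewrite !mxE mulrA. Qed.

Lemma hadmK m n (P M : 'M[R]_(m, n)) :
  (forall i j, P i j != 0) -> ediv (hadm P M) P = M.
Proof. by move=> P_neq0; apply/matrixP => i j; rewrite !mxE mulrAC divff ?mul1r. Qed.

Lemma hadmZr m n (A M : 'M[R]_(m, n)) k : hadm A (k *: M) = k *: hadm A M.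
Proof. by apply/matrixP => i j; rewrite !mxE mulrCA. Qed.

Lemma hadmDr m n (A M N : 'M[R]_(m, n)) : hadm A (M + N) = hadm A M + hadm A N.
Proof. by apply/matrixP => i j; rewrite !mxE mulrDr. Qed.

Lemma hadm_sumr m n I (r : seq I) (A : 'M[R]_(m, n)) (F : I -> 'M[R]_(m, n)) :
  hadm A (\sum_(k <- r) F k) = \sum_(k <- r) hadm A (F k).
Proof.
apply/matrixP => i j; rewrite !mxE !summxE mulr_sumr.
by apply: eq_bigr => k _; rewrite mxE.
Qed.

Lemma trmx_hadm m n (A B : 'M[R]_(m, n)) : (hadm A B)^T = hadm A^T B^T.
Proof. by apply/matrixP => i j; rewrite !mxE. Qed.

Lemma msum_trmx m n (A : 'M[R]_(m, n)) : msum A^T = msum A.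
Proof. by rewrite /msum exchange_big; apply: eq_bigr => i _; apply: eq_bigr => j _; rewrite mxE. Qed.

Lemma msumD m n (A B : 'M[R]_(m, n)) : msum (A + B) = msum A + msum B.
Proof.
rewrite /msum -big_split; apply: eq_bigr => i _; rewrite -big_split.
by apply: eq_bigr => j _; rewrite mxE.
Qed.

Lemma msum0 m n : msum (0 : 'M[R]_(m, n)) = 0.
Proof. by rewrite /msum big1 // => i _; rewrite big1 // => j _; rewrite mxE. Qed.

Lemma msum_sum m n I (r : seq I) (F : I -> 'M[R]_(m, n)) :
  msum (\sum_(k <- r) F k) = \sum_(k <- r) msum (F k).
Proof. exact: (big_morph msum (@msumD m n) (@msum0 m n)). Qed.

End EntrywiseAlgebra.

Section BilinearLRP.
Variables (R : realType) (m p n : nat).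
Variables (P : 'M[R]_(m, p)) (W : 'M[R]_(p, n)) (RC : 'M[R]_(m, n)).

(* No hypothesis is needed: where C_ij = 0 both sides vanish since x / 0 = 0. *)
Lemma lrp_leftE (c : R) :
  lrp_left c P W RC = (c / 2%:R) *: hadm P (ediv RC (c *: (P *m W)) *m W^T).
Proof.
apply/matrixP => i a; rewrite !mxE !mulr_sumr; apply: eq_bigr => j _.
rewrite !mxE; move: (\sum_(k < p) P i k * W k j) => s.
have [C0|] := eqVneq (c * s) 0; first by rewrite C0 !(invr0, mulr0, mul0r).
by rewrite mulf_eq0 negb_or => /andP[c_neq0 s_neq0]; field; rewrite c_neq0 s_neq0.
Qed.

Lemma lrp_rightE (c : R) :
  lrp_right c P W RC = (c / 2%:R) *: hadm W (P^T *m ediv RC (c *: (P *m W))).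
Proof.
apply/matrixP => a j; rewrite !mxE !mulr_sumr; apply: eq_bigr => i _.
rewrite !mxE; move: (\sum_(k < p) P i k * W k j) => s.
have [C0|] := eqVneq (c * s) 0; first by rewrite C0 !(invr0, mulr0, mul0r).
by rewrite mulf_eq0 negb_or => /andP[c_neq0 s_neq0]; field; rewrite c_neq0 s_neq0.
Qed.

Lemma msum_lrp (c : R) : (forall i j, (c *: (P *m W)) i j != 0) ->
  msum (lrp_left c P W RC) + msum (lrp_right c P W RC) = msum RC.
Proof.
move=> C_neq0.
pose t i a j := c * P i a * W a j / (c *: (P *m W)) i j * RC i j / 2%:R.
have share i j : \sum_(a < p) t i a j = RC i j / 2%:R.
  have := C_neq0 i j; rewrite /t -!mulr_suml.
  rewrite -(eq_bigr _ (fun a _ => mulrA _ _ _)) -mulr_sumr !mxE => C_ij_neq0.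
  by field; move: C_ij_neq0; rewrite mulf_eq0 negb_or andbC.
have -> : msum (lrp_left c P W RC) = \sum_i \sum_j \sum_a t i a j.
  by apply: eq_bigr => i _; rewrite exchange_big; apply: eq_bigr => a _; rewrite mxE.
have -> : msum (lrp_right c P W RC) = \sum_i \sum_j \sum_a t i a j.
  rewrite /msum; under eq_bigr do under eq_bigr do rewrite mxE.
  rewrite exchange_big /=; under eq_bigr do rewrite exchange_big /=.
  by rewrite exchange_big.
rewrite -big_split; apply: eq_bigr => i _; rewrite -big_split; apply: eq_bigr => j _ /=.
by rewrite share -splitr.
Qed.

Lemma lrp_left1E :
  lrp_left 1 P W RC = 2%:R^-1 *: hadm P (ediv RC (P *m W) *m W^T).
Proof. by rewrite lrp_leftE scale1r div1r. Qed.

Lemma lrp_right1E :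
  lrp_right 1 P W RC = 2%:R^-1 *: hadm W (P^T *m ediv RC (P *m W)).
Proof. by rewrite lrp_rightE scale1r div1r. Qed.

Lemma msum_lrp1 : (forall i j, (P *m W) i j != 0) ->
  msum (lrp_left 1 P W RC) + msum (lrp_right 1 P W RC) = msum RC.
Proof. by move=> PW_neq0; apply: msum_lrp => i j; rewrite scale1r. Qed.

End BilinearLRP.

Section LinearProjection.
Variables (R : realType) (m d n : nat) (k : R).
Variables (X : 'M[R]_(m, d)) (W : 'M[R]_(d, n)) (T : 'M[R]_(m, n)).
Hypothesis XW_neq0 : forall i j, (X *m W) i j != 0.

Lemma lrp_left_hadm :
  lrp_left 1 X W (k *: hadm (X *m W) T) = hadm X ((k / 2%:R) *: (T *m W^T)).
Proof. by rewrite lrp_left1E edivZl hadmK // -scalemxAl !hadmZr scalerA mulrC. Qed.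

Lemma lrp_right_hadm :
  lrp_right 1 X W (k *: hadm (X *m W) T) = (k / 2%:R) *: hadm W (X^T *m T).
Proof. by rewrite lrp_right1E edivZl hadmK // -scalemxAr hadmZr scalerA mulrC. Qed.

End LinearProjection.

Section ColumnBlocks.
Variables (h dh : nat).

Lemma blk_bidx (r : 'I_h) (c : 'I_dh) : blk (bidx r c) = r.
Proof.
have dh_gt0 : (0 < dh)%N by apply: leq_ltn_trans (ltn_ord c).
by apply: val_inj; rewrite /= divnMDl // divn_small ?addn0.
Qed.

Lemma off_bidx (r : 'I_h) (c : 'I_dh) : off (bidx r c) = c.
Proof. by apply: val_inj; rewrite /= modnMDl modn_small. Qed.

Lemma bidx_blk (j : 'I_(h * dh)) : bidx (blk j) (off j) = j.
Proof. by apply: val_inj; rewrite /= -divn_eq. Qed.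

Lemma big_bidx (R : realType) (F : 'I_(h * dh) -> R) :
  \sum_(j < h * dh) F j = \sum_(r < h) \sum_(c < dh) F (bidx r c).
Proof.
rewrite pair_big /= (reindex (fun rc : 'I_h * 'I_dh => bidx rc.1 rc.2)) //=.
exists (fun j => (blk j, off j)) => [[r c] _ | j _] /=.
  by rewrite blk_bidx off_bidx.
by rewrite bidx_blk.
Qed.

Lemma msum_colblk (R : realType) m (M : 'M[R]_(m, h * dh)) :
  \sum_(r < h) msum (colblk M r) = msum M.
Proof.
rewrite /msum exchange_big /=; apply: eq_bigr => i _.
by rewrite big_bidx; apply: eq_bigr => r _; apply: eq_bigr => c _; rewrite mxE.
Qed.

Lemma concat_bidx (R : realType) m (F : 'I_h -> 'M[R]_(m, dh)) i r c :
  concat F i (bidx r c) = F r i c.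
Proof. by rewrite mxE blk_bidx off_bidx. Qed.

End ColumnBlocks.

Section AttentionHead.
Variables (R : realType) (m d dh : nat) (s : R).
Variables (X : 'M[R]_(m, d)) (WQ WK WV : 'M[R]_(d, dh)) (A : 'M[R]_m).
Variables (ROr LO : 'M[R]_(m, dh)).

Local Notation Q := (X *m WQ).
Local Notation K := (X *m WK).
Local Notation V := (X *m WV).
Local Notation E := (s^-1 *: (Q *m K^T)).
Local Notation RA := (lrp_left 1 A V ROr).
Local Notation RV := (lrp_right 1 A V ROr).
Local Notation RQ := (lrp_left s^-1 Q K^T RA).
Local Notation RK := (lrp_right s^-1 Q K^T RA)^T.
Local Notation Phi := (ediv (hadm A (LO *m V^T)) E).

Hypothesis s_neq0 : s != 0.
(* LO stays abstract: the theorem defines it from the closed form of R(O_r),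
   which equals ROr only propositionally. *)
Hypothesis LO_def : ediv ROr (A *m V) = LO.

Lemma lrp_attention : RA = 2%:R^-1 *: hadm A (LO *m V^T).
Proof. by rewrite lrp_left1E LO_def. Qed.

Lemma lrp_values : RV = 2%:R^-1 *: hadm V (A^T *m LO).
Proof. by rewrite lrp_right1E LO_def. Qed.

Lemma lrp_queries : RQ = (4%:R * s)^-1 *: hadm Q (Phi *m K).
Proof.
rewrite lrp_leftE lrp_attention edivZl trmxK -scalemxAl hadmZr scalerA.
by congr (_ *: _); field.
Qed.

Lemma lrp_keys : RK = (4%:R * s)^-1 *: hadm K (Phi^T *m Q).
Proof.
rewrite lrp_rightE lrp_attention edivZl -scalemxAr hadmZr scalerA linearZ /=.
rewrite trmx_hadm trmxK trmx_mul trmxK.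
by congr (_ *: _); field.
Qed.

Hypothesis Q_neq0 : forall i j, Q i j != 0.
Hypothesis K_neq0 : forall i j, K i j != 0.
Hypothesis V_neq0 : forall i j, V i j != 0.

Let inv4M_half : (4%:R * s)^-1 / 2%:R = (8%:R * s)^-1.
Proof. by field. Qed.

Lemma lrp_query_weights :
  lrp_right 1 X WQ RQ = (8%:R * s)^-1 *: hadm WQ (X^T *m (Phi *m K)).
Proof. by rewrite lrp_queries lrp_right_hadm // inv4M_half. Qed.

Lemma lrp_key_weights :
  lrp_right 1 X WK RK = (8%:R * s)^-1 *: hadm WK (X^T *m (Phi^T *m Q)).
Proof. by rewrite lrp_keys lrp_right_hadm // inv4M_half. Qed.

Lemma lrp_value_weights :
  lrp_right 1 X WV RV = 4%:R^-1 *: hadm WV (X^T *m (A^T *m LO)).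
Proof. by rewrite lrp_values lrp_right_hadm //; congr (_ *: _); field. Qed.

Lemma lrp_query_inputs :
  lrp_left 1 X WQ RQ = hadm X ((8%:R * s)^-1 *: (Phi *m K *m WQ^T)).
Proof. by rewrite lrp_queries lrp_left_hadm // inv4M_half. Qed.

Lemma lrp_key_inputs :
  lrp_left 1 X WK RK = hadm X ((8%:R * s)^-1 *: (Phi^T *m Q *m WK^T)).
Proof. by rewrite lrp_keys lrp_left_hadm // inv4M_half. Qed.

Lemma lrp_value_inputs :
  lrp_left 1 X WV RV = hadm X (4%:R^-1 *: (A^T *m LO *m WV^T)).
Proof. by rewrite lrp_values lrp_left_hadm //; congr (hadm _ (_ *: _)); field. Qed.

Lemma msum_lrp_head :
  (forall i j, E i j != 0) -> (forall i j, (A *m V) i j != 0) ->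
  msum (lrp_left 1 X WQ RQ + lrp_left 1 X WK RK + lrp_left 1 X WV RV)
    + (msum (lrp_right 1 X WQ RQ) + msum (lrp_right 1 X WK RK)
       + msum (lrp_right 1 X WV RV))
  = msum ROr.
Proof.
move=> E_neq0 AV_neq0.
have scores : msum RA + msum RV = msum ROr := msum_lrp1 ROr AV_neq0.
have queries_keys : msum RQ + msum RK = msum RA.
  by rewrite msum_trmx; apply: msum_lrp.
have queries := msum_lrp1 RQ Q_neq0.
have keys := msum_lrp1 RK K_neq0.
have values := msum_lrp1 RV V_neq0.
rewrite !msumD -scores -queries_keys -queries -keys -values.
ring.
Qed.

End AttentionHead.

Theorem proposition2 (R : realType) (m h dh : nat)
  (hm : (0 < m)%N) (hh : (0 < h)%N) (hdh : (0 < dh)%N)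
  (X : 'M[R]_(m, h * dh)) (WQ WK WV : 'I_h -> 'M[R]_(h * dh, dh))
  (WO : 'M[R]_(h * dh, h * dh)) (Rf : 'M[R]_(m, h * dh)) :
  (* forward pass *)
  let sq := Num.sqrt (dh%:R : R) in
  let Q := fun r => X *m WQ r in
  let K := fun r => X *m WK r in
  let V := fun r => X *m WV r in
  let E := fun r => sq^-1 *: (Q r *m (K r)^T) in
  let A := fun r => softmax (E r) in
  let Or := fun r => A r *m V r in
  let O := concat Or in
  let f := O *m WO in
  (forall i j, f i j != 0) -> (forall i j, O i j != 0) ->
  (forall r i j, E r i j != 0) -> (forall r i j, Q r i j != 0) ->
  (forall r i j, K r i j != 0) -> (forall r i j, V r i j != 0) ->
  (* relevances produced by the LRP rules *)
  let RO := lrp_left 1 O WO Rf in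
  let RWO := lrp_right 1 O WO Rf in
  let ROr := fun r => colblk RO r in
  let RA := fun r => lrp_left 1 (A r) (V r) (ROr r) in
  let RV := fun r => lrp_right 1 (A r) (V r) (ROr r) in
  let RE := RA in (* softmax: identity relevance propagation *)
  let RQ := fun r => lrp_left sq^-1 (Q r) (K r)^T (RE r) in
  let RK := fun r => (lrp_right sq^-1 (Q r) (K r)^T (RE r))^T in
  let RWQ := fun r => lrp_right 1 X (WQ r) (RQ r) in
  let RWK := fun r => lrp_right 1 X (WK r) (RK r) in
  let RWV := fun r => lrp_right 1 X (WV r) (RV r) in
  let RX := \sum_(r < h) (lrp_left 1 X (WQ r) (RQ r) + lrp_left 1 X (WK r) (RK r)
                          + lrp_left 1 X (WV r) (RV r)) in
  (* closed forms *)
  let Lf := ediv Rf f in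
  let ROc := fun r => colblk ((2%:R)^-1 *: hadm O (Lf *m WO^T)) r in
  let LO := fun r => ediv (ROc r) (Or r) in
  let Phi := fun r => ediv (hadm (A r) (LO r *m (V r)^T)) (E r) in
  let TQ := fun r => Phi r *m K r in
  let TK := fun r => (Phi r)^T *m Q r in
  let TV := fun r => (A r)^T *m LO r in
  let alpha := (8%:R * sq)^-1 in
  ([/\ RWO = (2%:R)^-1 *: hadm WO (O^T *m Lf),
      forall r, RWQ r = alpha *: hadm (WQ r) (X^T *m TQ r),
      forall r, RWK r = alpha *: hadm (WK r) (X^T *m TK r),
      forall r, RWV r = (4%:R)^-1 *: hadm (WV r) (X^T *m TV r)
    & RX = hadm X (\sum_(r < h) (alpha *: (TQ r *m (WQ r)^T)
                                + alpha *: (TK r *m (WK r)^T)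
                                + (4%:R)^-1 *: (TV r *m (WV r)^T)))])
  /\ msum RX + msum RWO
      + \sum_(r < h) (msum (RWQ r) + msum (RWK r) + msum (RWV r)) = msum Rf.
Proof.
move=> sq Q K V E A Or O f f_neq0 O_neq0 E_neq0 Q_neq0 K_neq0 V_neq0
  RO RWO ROr RA RV RE RQ RK RWQ RWK RWV RX Lf ROc LO Phi TQ TK TV alpha.
have sq_neq0 : sq != 0 by rewrite gt_eqF // sqrtr_gt0 ltr0n.
have LO_def r : ediv (ROr r) (A r *m V r) = LO r by rewrite /ROr /RO lrp_left1E.
have Or_neq0 r i c : (A r *m V r) i c != 0.
  by have := O_neq0 i (bidx r c); rewrite /O concat_bidx.
split; first split.
- by rewrite /RWO lrp_right1E.
- by move=> r; exact: lrp_query_weights sq_neq0 (LO_def r) (Q_neq0 r).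
- by move=> r; exact: lrp_key_weights sq_neq0 (LO_def r) (K_neq0 r).
- by move=> r; exact: lrp_value_weights (LO_def r) (V_neq0 r).
- rewrite /RX hadm_sumr; apply: eq_bigr => r _; rewrite !hadmDr.
  congr (_ + _ + _).
  + exact: lrp_query_inputs sq_neq0 (LO_def r) (Q_neq0 r).
  + exact: lrp_key_inputs sq_neq0 (LO_def r) (K_neq0 r).
  + exact: lrp_value_inputs (LO_def r) (V_neq0 r).
rewrite addrAC /RX msum_sum -big_split /= (eq_bigr (fun r => msum (ROr r))).
  by rewrite msum_colblk; exact: msum_lrp1 Rf f_neq0.
move=> r _.
exact (msum_lrp_head (ROr r) (Q_neq0 r) (K_neq0 r) (V_neq0 r) (E_neq0 r) (Or_neq0 r)).
Qed.
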